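(* Let $p$ be a prime, $S$ a finite non-abelian simple group, $G$ the universal $p'$-covering group of $S$, and $\phi\in\mathrm{IBr}(G)$. Put $\bar G:=G/(Z(G)\cap\ker\phi)$. Then there exists a finite group $A$ such that: (i) $A$ contains $\bar G$ as a normal subgroup, the conjugation action induces an isomorphism $A/C_A(\bar G)\cong\mathrm{Aut}(G)_\phi$, $C_A(\bar G)=Z(A)$, and $p\nmid|Z(A)|$; (ii) the Brauer character $\bar\phi\in\mathrm{IBr}(\bar G)$ whose inflation to $G$ is $\phi$ extends to $A$.
   Context: Universal $p'$-covering group of $S$: $Y/Z(Y)_p$, where $Y$ is the universal covering group of $S$ (perfect, $Y/Z(Y)\cong S$, $|Z(Y)|$ maximal) and $Z(Y)_p$ the Sylow $p$-subgroup of $Z(Y)$. Brauer characters are taken with respect to a splitting $p$-modular system. $\mathrm{Aut}(G)_\phi$ is the stabilizer of $\phi$ in $\mathrm{Aut}(G)$; its elements stabilize $Z(G)\cap\ker\phi$ and thus act on $\bar G$. *)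

From HB Require Import structures.
From mathcomp Require Import all_boot all_order all_algebra all_fingroup all_solvable all_field all_character.
Set Implicit Arguments. Unset Strict Implicit. Unset Printing Implicit Defensive.
Import GRing.Theory.
Local Open Scope group_scope.

Definition covering_group (sT yT : finGroupType) (S : {group sT}) (Y : {group yT}) : Prop :=
  Y^`(1)%g = Y /\ ((Y / 'Z(Y))%g \isog S).

Definition universal_covering_group (sT yT : finGroupType) (S : {group sT}) (Y : {group yT}) : Prop :=
  covering_group S Y /\
  forall (hT : finGroupType) (Y' : {group hT}), covering_group S Y' -> #|'Z(Y')| <= #|'Z(Y)|.

Definition universal_pprime_cover (p : nat) (sT gT : finGroupType) (S : {group sT}) (G : {group gT}) : Prop :=
  exists (yT : finGroupType) (Y P : {group yT}),
    [/\ universal_covering_group S Y, P \in 'Syl_p('Z(Y)) & G \isog (Y / P)%g].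

(* a lies in Aut(G)_phi, where phi is the Brauer character afforded by rho:
   a is an automorphism of G and the twisted representation rho o a is
   similar to rho. *)
Definition in_Aut_stab (F : fieldType) (gT : finGroupType) (G : {group gT}) (n : nat)
  (rho : mx_representation F G n) (a : {perm gT}) : Prop :=
  a \in Aut G /\
  exists2 B : 'M[F]_n, (B \in unitmx)%R & forall x, x \in G -> (rho (a x) *m B = B *m rho x)%R.

From HB Require Import structures.
From mathcomp Require Import all_boot all_order all_algebra all_fingroup all_solvable all_field all_character.
From Stdlib Require Import Classical.
Set Implicit Arguments. Unset Strict Implicit. Unset Printing Implicit Defensive.
Import GRing.Theory.
Local Open Scope group_scope.

(* The group A consists of the pairs (a, N) with a in Aut(G) and N a
   determinant-one matrix with rho(y) N = N rho(a y) on G; the first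
   components are exactly the automorphisms fixing the Brauer character of
   rho. By Schur's lemma N is determined by a up to an n-th root of unity, so
   A is finite. The map g |-> (conjugation by g, rho g), which makes sense
   because rho has determinant one on the perfect group G, embeds
   G / (Z(G) :&: ker rho) in A, conjugation by A acts on this image through
   the first components, and (a, N) |-> N extends rho to A. An element of A
   centralising the image of G induces on G an automorphism that is trivial
   modulo Z(G), hence trivial since G is perfect, so it is (1, l) with l a
   scalar: these are exactly the central elements of A, and l ^ p = 1
   forces l = 1 in characteristic p, so Z(A) is a p'-group. *)

Record closed_group_seq := ClosedGroupSeq {
  cg_type : choiceType;
  cg_elems : seq cg_type;
  cg_one : cg_type;
  cg_mul : cg_type -> cg_type -> cg_type;
  cg_inv : cg_type -> cg_type;
  cg_one_in : cg_one \in cg_elems;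
  cg_mul_in : forall x y, x \in cg_elems -> y \in cg_elems -> cg_mul x y \in cg_elems;
  cg_inv_in : forall x, x \in cg_elems -> cg_inv x \in cg_elems;
  cg_mulA : {in cg_elems & &, associative cg_mul};
  cg_mul1 : {in cg_elems, left_id cg_one cg_mul};
  cg_mulV : {in cg_elems, left_inverse cg_one cg_inv cg_mul}
}.

Section ClosedGroupSeqType.

Variable D : closed_group_seq.

Definition cg_group := seq_sub (cg_elems D).
HB.instance Definition _ := Finite.on cg_group.

Definition cg_group_mul (x y : cg_group) : cg_group :=
  SeqSub (cg_mul_in (ssvalP x) (ssvalP y)).
Definition cg_group_one : cg_group := SeqSub (cg_one_in D).
Definition cg_group_inv (x : cg_group) : cg_group := SeqSub (cg_inv_in (ssvalP x)).

Lemma cg_group_mulA : associative cg_group_mul.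
Proof. by move=> x y z; apply: val_inj; rewrite /= cg_mulA ?ssvalP. Qed.

Lemma cg_group_mul1 : left_id cg_group_one cg_group_mul.
Proof. by move=> x; apply: val_inj; rewrite /= cg_mul1 ?ssvalP. Qed.

Lemma cg_group_mulV : left_inverse cg_group_one cg_group_inv cg_group_mul.
Proof. by move=> x; apply: val_inj; rewrite /= cg_mulV ?ssvalP. Qed.

HB.instance Definition _ :=
  Finite_isGroup.Build cg_group cg_group_mulA cg_group_mul1 cg_group_mulV.

Lemma ssval_inj : injective (@ssval _ (cg_elems D) : cg_group -> _).
Proof. exact: val_inj. Qed.

Lemma ssvalM (x y : cg_group) : ssval (x * y) = cg_mul (ssval x) (ssval y).
Proof. by []. Qed.

Lemma ssval1 : ssval (1 : cg_group) = cg_one D.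
Proof. by []. Qed.

Lemma ssvalV (x : cg_group) : ssval x^-1 = cg_inv (ssval x).
Proof. by []. Qed.

End ClosedGroupSeqType.

Section Automorphisms.

Variables (gT : finGroupType) (G : {group gT}).

Lemma Aut_closedE (a : {perm gT}) y : a \in Aut G -> (a y \in G) = (y \in G).
Proof. by rewrite inE => /andP[/perm_closed]. Qed.

Lemma conj_aut_Aut g : g \in G -> conj_aut G g \in Aut G.
Proof.
by move=> Gg; apply: (subsetP (Aut_conj_aut G G)); rewrite mem_morphim ?(subsetP (normG G)).
Qed.

(* Recall that permutations compose left to right: (a * b) x = b (a x). *)
Lemma conj_aut_Aut_conj (a : {perm gT}) g : a \in Aut G -> g \in G ->
  conj_aut G (a g) = a^-1 * conj_aut G g * a.
Proof.
move=> Aa Gg; have Gag : a g \in G by rewrite Aut_closedE.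
apply: (eq_Aut (conj_aut_Aut Gag)) => [|y Gy].
  by rewrite !groupM ?groupV ?conj_aut_Aut.
have Gy' : a^-1 y \in G by rewrite Aut_closedE ?groupV.
have aJ : a ((a^-1 y) ^ g) = a (a^-1 y) ^ a g by rewrite -(autmE Aa) morphJ.
by rewrite !permM conj_autE // conj_autE // aJ permKV.
Qed.

(* [~ c x, d y] = [~ x, y] when c and d are central. *)
Lemma central_Aut_commg (a : {perm gT}) x y :
    a \in Aut G -> {in G, forall z, a z * z^-1 \in 'C(G)} -> x \in G -> y \in G ->
  a [~ x, y] = [~ x, y].
Proof.
move=> Aa cGa Gx Gy; have Gay : a y \in G by rewrite Aut_closedE.
have comm1 w z : w \in 'C(G) -> z \in G -> [~ w, z] = 1 /\ [~ z, w] = 1.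
  by move=> /centP cGw Gz; split; apply/eqP/commgP; last apply: commute_sym; apply: cGw.
have [comm_ax _] := comm1 _ _ (cGa x Gx) Gay; have [_ comm_ay] := comm1 _ _ (cGa y Gy) Gx.
rewrite -(autmE Aa) morphR //= autmE -[a x](mulgKV x) commMgJ comm_ax conj1g mul1g.
by rewrite -[a y](mulgKV y) commgMJ comm_ay conj1g mulg1.
Qed.

End Automorphisms.

Section PerfectGroups.

Variables (gT : finGroupType) (G : {group gT}).
Hypothesis perfG : G^`(1) = G.

Lemma perfect_sub_commg (H : {group gT}) :
  {in G &, forall x y, [~ x, y] \in H} -> G \subset H.
Proof.
move=> cGH; rewrite -{1}perfG derg1 gen_subG.
by apply/subsetP=> _ /imset2P[x y Gx Gy ->]; apply: cGH.
Qed.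

Lemma perfect_det_repr1 (F : fieldType) n (rG : mx_representation F G n) :
  {in G, forall x, (\det (rG x) = 1)%R}.
Proof.
have detM : mx_repr G (fun x => (\det (rG x))%:M : 'M[F]_1)%R.
  split=> [|x y Gx Gy]; first by rewrite repr_mx1 det1.
  by rewrite repr_mxM // det_mulmx scalar_mxM.
move=> x Gx; have := rker_linear (MxRepresentation detM) (erefl 1%N).
rewrite perfG => /subsetP/(_ x Gx)/rkerP[_ /matrixP/(_ 0 0)%R].
by rewrite !mxE eqxx !mulr1n.
Qed.

Lemma perfect_central_Aut1 (a : {perm gT}) :
  a \in Aut G -> {in G, forall x, a x * x^-1 \in 'C(G)} -> a = 1.
Proof.
move=> Aa cGa; have fixG : group_set [set x in G | a x == x].
  apply/group_setP; split=> [|x y]; first by rewrite inE group1 -(autmE Aa) morph1 eqxx.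
  rewrite !inE => /andP[Gx /eqP ax] /andP[Gy /eqP ay].
  by rewrite groupM // -(autmE Aa) morphM //= autmE ax ay eqxx.
have /subsetP sGfix : G \subset group fixG.
  apply: perfect_sub_commg => x y Gx Gy.
  by rewrite inE groupR //= (central_Aut_commg Aa cGa).
apply: (eq_Aut Aa) => [|x Gx]; first exact: group1.
by rewrite perm1; have /setIdP[_ /eqP] := sGfix x Gx.
Qed.

End PerfectGroups.

Section StabilizerGroup.

Variables (F : closedFieldType) (gT : finGroupType) (G : {group gT}) (n : nat).
Variable rho : mx_representation F G n.
Hypothesis irr_rho : mx_irreducible rho.

Local Open Scope ring_scope.
Local Notation pairT := ({perm gT} * 'M[F]_n)%type.

(* N plays the role of B^-1 in [in_Aut_stab], so that (a, N) |-> N will be a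
   representation; the condition det N = 1 is what makes the group finite. *)
Definition stab_pair (x : pairT) : bool :=
  [&& x.1 \in Aut G, \det x.2 == 1 &
      [forall y in G, rho y *m x.2 == x.2 *m rho (x.1 y)]].

Lemma stab_pairP a N :
  reflect [/\ a \in Aut G, \det N = 1 & {in G, forall y, rho y *m N = N *m rho (a y)}]
          (stab_pair (a, N)).
Proof.
apply: (iffP and3P) => [[-> /eqP-> /forall_inP cN] | [-> -> cN]].
  by split=> // y Gy; apply/eqP/cN.
by split=> //; apply/forall_inP => y Gy; apply/eqP/cN.
Qed.

Lemma stab_pair_unit x : stab_pair x -> x.2 \in unitmx.
Proof. by case: x => a N /stab_pairP[_ detN _]; rewrite unitmxE detN unitr1. Qed.

Lemma stab_pair_conj a N : stab_pair (a, N) ->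
  {in G, forall y, rho (a y) = invmx N *m rho y *m N}.
Proof.
move=> sN; have uN := stab_pair_unit sN; case/stab_pairP: sN => _ _ cN y Gy.
by rewrite -mulmxA cN // mulKmx.
Qed.

Lemma rep_dim_gt0 : (0 < n)%N.
Proof. by case/mx_irrP: irr_rho. Qed.

(* Schur's lemma: N1 N2^-1 centralises rho, which is absolutely irreducible. *)
Lemma stab_pair_scalar a N1 N2 : stab_pair (a, N1) -> stab_pair (a, N2) ->
  exists2 l : F, l ^+ n = 1 & N1 = l *: N2.
Proof.
move=> sN1 sN2; have uN2 := stab_pair_unit sN2.
have /stab_pairP[_ detN1 cN1] := sN1; have /stab_pairP[_ detN2 _] := sN2.
have centN : centgmx rho (N1 *m invmx N2).
  apply/centgmxP => y Gy.
  have cN2 : invmx N2 *m rho y = rho (a y) *m invmx N2.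
    by rewrite (stab_pair_conj sN2) // mulmxK.
  by rewrite -mulmxA cN2 mulmxA -cN1 // mulmxA.
have absG : mx_absolutely_irreducible rho by apply: group_closure_closed_field.
have /is_scalar_mxP[l eN] := mx_abs_irr_cent_scalar absG centN.
have N1E : N1 = l *: N2 by rewrite -mul_scalar_mx -eN mulmxKV.
by exists l; rewrite // -detN1 N1E detZ detN2 mulr1.
Qed.

Lemma unity_roots_finite : exists rs : seq F, forall l : F, l ^+ n = 1 -> l \in rs.
Proof.
have [rs rsE] := closed_field_poly_normal ('X^n - 1 : {poly F}).
exists rs => l ln1; move: rsE; rewrite lead_coefXnsubC ?rep_dim_gt0 // scale1r => rsE.
by rewrite -root_prod_XsubC -rsE rootE !hornerE ln1 subrr.
Qed.

Lemma stab_fiber_finite a :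
  exists s : seq pairT, forall N, stab_pair (a, N) -> (a, N) \in s.
Proof.
have [[N0 sN0] | noN] := classic (exists N0, stab_pair (a, N0)); last first.
  by exists [::] => N sN; case: noN; exists N.
have [rs rsP] := unity_roots_finite.
exists [seq (a, l *: N0) | l <- rs] => N sN.
by have [l /rsP rs_l ->] := stab_pair_scalar sN sN0; rewrite map_f.
Qed.

Lemma stab_pairs_finite : exists s : seq pairT, forall x, stab_pair x -> x \in s.
Proof.
suff [s sP] : exists s : seq pairT,
    forall x, stab_pair x -> x.1 \in enum {perm gT} -> x \in s.
  by exists s => x sx; rewrite sP ?mem_enum.
elim: (enum _) => [|a L [s sP]]; first by exists [::].
have [sa saP] := stab_fiber_finite a.
exists (sa ++ s) => -[b N] sx; rewrite in_cons mem_cat => /predU1P[/= ba | bL].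
  by move: sx; rewrite ba => /saP->.
by rewrite sP ?orbT.
Qed.

Definition pair1 : pairT := (1%g, 1%:M).
Definition pairM (x y : pairT) : pairT := ((x.1 * y.1)%g, x.2 *m y.2).
Definition pairV (x : pairT) : pairT := ((x.1^-1)%g, invmx x.2).

Lemma stab_pair1 : stab_pair pair1.
Proof. by apply/stab_pairP; split=> [||y Gy]; rewrite ?group1 ?det1 ?perm1 ?mulmx1 ?mul1mx. Qed.

Lemma stab_pairM x y : stab_pair x -> stab_pair y -> stab_pair (pairM x y).
Proof.
case: x y => [a N1] [b N2] /stab_pairP[Aa detN1 cN1] /stab_pairP[Ab detN2 cN2].
apply/stab_pairP; split=> [||y Gy]; rewrite ?groupM ?det_mulmx ?detN1 ?detN2 ?mulr1 //=.
by rewrite mulmxA cN1 // -mulmxA cN2 ?Aut_closedE // mulmxA permM.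
Qed.

Lemma stab_pairV x : stab_pair x -> stab_pair (pairV x).
Proof.
case: x => a N sN; have uN := stab_pair_unit sN; have /stab_pairP[Aa detN _] := sN.
apply/stab_pairP; split=> [||y Gy]; rewrite ?groupV ?det_inv ?detN ?invr1 //=.
have Gy' : (a^-1)%g y \in G by rewrite Aut_closedE ?groupV.
by have := stab_pair_conj sN Gy'; rewrite permKV => ->; rewrite mulmxK.
Qed.

Lemma pairMA : associative pairM.
Proof. by move=> x y z; rewrite /pairM /= mulgA mulmxA. Qed.

Lemma pair1M : left_id pair1 pairM.
Proof. by case=> a N; rewrite /pairM /= mul1g mul1mx. Qed.

Lemma pairVM x : stab_pair x -> pairM (pairV x) x = pair1.
Proof. by move=> sx; rewrite /pairM /= mulVg mulVmx ?stab_pair_unit. Qed.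

Variable stab_enum : seq pairT.
Hypothesis stab_enumE : forall x, (x \in stab_enum) = stab_pair x.

Definition stab_group_seq : closed_group_seq.
Proof.
refine (@ClosedGroupSeq pairT stab_enum pair1 pairM pairV _ _ _ _ _ _).
- by rewrite stab_enumE stab_pair1.
- by move=> x y; rewrite !stab_enumE; apply: stab_pairM.
- by move=> x; rewrite !stab_enumE; apply: stab_pairV.
- by move=> x y z _ _ _; apply: pairMA.
- by move=> x _; apply: pair1M.
- by move=> x; rewrite stab_enumE; apply: pairVM.
Defined.

Local Notation stabG := (cg_group stab_group_seq).

Lemma stabG_pair (x : stabG) : stab_pair (ssval x).
Proof. by rewrite -stab_enumE ssvalP. Qed.

Definition stab_aut (x : stabG) : {perm gT} := (ssval x).1.

Lemma stab_autM : {in [set: stabG] &, {morph stab_aut : x y / (x * y)%g}}.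
Proof. by []. Qed.
Canonical stab_aut_morphism := Morphism stab_autM.

Lemma stab_aut_Aut x : stab_aut x \in Aut G.
Proof. by case/and3P: (stabG_pair x). Qed.

Lemma stab_aut_closed x g : g \in G -> stab_aut x g \in G.
Proof. by rewrite Aut_closedE ?stab_aut_Aut. Qed.

Lemma im_stab_aut a : a \in stab_aut @* [set: stabG] <-> in_Aut_stab rho a.
Proof.
split=> [/morphimP[x _ _ ->] | [Aa [B uB cB]]].
  have sx := stabG_pair x; rewrite [ssval x]surjective_pairing in sx.
  split; first exact: stab_aut_Aut.
  exists (invmx (ssval x).2); first by rewrite unitmx_inv (stab_pair_unit sx).
  by move=> y Gy; rewrite /stab_aut (stab_pair_conj sx) // mulmxK ?(stab_pair_unit sx).
have [l] : exists l : F, root ('X^n - (\det B)%:P) l.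
  by apply/closed_rootP; rewrite size_XnsubC ?rep_dim_gt0 // -lt0n rep_dim_gt0.
rewrite rootE !hornerE subr_eq0 => /eqP ln.
have sx : stab_pair (a, l *: invmx B).
  apply/stab_pairP; split=> // [|y Gy].
    by rewrite detZ ln det_inv mulfV // -unitfE -unitmxE.
  by rewrite -scalemxAr -scalemxAl -[rho (a y)](mulmxK uB) cB // !mulmxA mulVmx ?mul1mx.
have xP : insubd (1%g : stabG) (a, l *: invmx B) \in [set: stabG] by rewrite inE.
by have := mem_morphim stab_aut_morphism xP xP; rewrite /= /stab_aut insubdK ?stab_enumE.
Qed.

Hypothesis perfG : (G^`(1))%g = G.

Definition conj_pair g : pairT := (conj_aut G g, rho g).

Lemma stab_conj_pair g : g \in G -> stab_pair (conj_pair g).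
Proof.
move=> Gg; apply/stab_pairP; split=> [||y Gy]; first exact: conj_aut_Aut.
  exact: perfect_det_repr1.
by rewrite conj_autE // conjgE -!repr_mxM ?groupM ?groupV // mulKVg.
Qed.

Definition conj_stab g : stabG := insubd (1%g : stabG) (conj_pair g).

Lemma conj_stabE g : g \in G -> ssval (conj_stab g) = conj_pair g.
Proof. by move=> Gg; rewrite insubdK // stab_enumE stab_conj_pair. Qed.

Lemma conj_stabM : {in G &, {morph conj_stab : x y / (x * y)%g}}.
Proof.
move=> x y Gx Gy; apply: ssval_inj; rewrite ssvalM !conj_stabE ?groupM //.
by rewrite /conj_pair /pairM /= conj_aut_morphM ?repr_mxM ?(subsetP (normG G)).
Qed.
Canonical conj_stab_morphism := Morphism conj_stabM.

Lemma conj_stab_eq1 g : g \in G -> conj_stab g = 1%g <-> g \in 'C(G) /\ rho g = 1%:M.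
Proof.
move=> Gg; have nGg : g \in 'N(G) := subsetP (normG G) g Gg.
rewrite -ker_conj_aut; split=> [/(congr1 (@ssval _ _)) | [Kg rg1]].
  by rewrite conj_stabE // => -[/kerP-> //].
by apply: ssval_inj; rewrite conj_stabE // /conj_pair rg1 (mker Kg).
Qed.

Lemma ker_conj_stab : 'ker conj_stab = 'Z(G) :&: rker rho.
Proof.
apply/setP=> g; apply/idP/idP => [Kg | /setIP[/setIP[Gg cGg] /rkerP[_ rg1]]].
  have Gg := dom_ker Kg; have /(conj_stab_eq1 Gg)[cGg rg1] := mker Kg.
  by rewrite in_setI [g \in 'Z(G)]inE Gg cGg; apply/rkerP.
by apply/kerP => //; apply/conj_stab_eq1.
Qed.

Lemma conj_stabJ x g : g \in G -> conj_stab (stab_aut x g) = (conj_stab g ^ x)%g.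
Proof.
move=> Gg; have sx := stabG_pair x; rewrite [ssval x]surjective_pairing in sx.
have Aa := stab_aut_Aut x; have Gag := stab_aut_closed x Gg.
apply: ssval_inj; rewrite conjgE !ssvalM ssvalV !conj_stabE //.
rewrite /conj_pair conj_aut_Aut_conj // (stab_pair_conj sx) //.
by rewrite /= /pairM /pairV /= mulgA mulmxA.
Qed.

Lemma ker_stab_aut_scalar x : x \in 'ker stab_aut -> exists l : F, ssval x = (1%g, l%:M).
Proof.
move=> Kx; have ax1 : (ssval x).1 = 1%g := mker Kx.
have /stab_pairP[_ _ cN] : stab_pair (1%g, (ssval x).2).
  by rewrite -ax1 -surjective_pairing stabG_pair.
have centN : centgmx rho (ssval x).2.
  by apply/centgmxP => y Gy; rewrite cN // perm1.
have absG : mx_absolutely_irreducible rho by apply: group_closure_closed_field.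
have /is_scalar_mxP[l Nl] := mx_abs_irr_cent_scalar absG centN.
by exists l; rewrite [ssval x]surjective_pairing ax1 Nl.
Qed.

Lemma ker_stab_aut : 'ker stab_aut = 'C_[set: stabG](conj_stab @* G).
Proof.
apply/setP=> x; apply/idP/idP => [Kx | /setIP[_ cx]].
  have [l xl] := ker_stab_aut_scalar Kx.
  rewrite in_setI in_setT; apply/centP => _ /morphimP[g _ Gg ->]; apply: ssval_inj.
  by rewrite !ssvalM conj_stabE // xl /= /pairM /= mulg1 mul1g scalar_mxC.
apply/kerP; rewrite ?inE //; apply: perfect_central_Aut1 (stab_aut_Aut x) _ => // g Gg.
have Gag := stab_aut_closed x Gg.
have cxg : commute (conj_stab g) x.
  by apply: commute_sym; apply: (centP cx); rewrite mem_morphim.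
have Gagg : (stab_aut x g * g^-1)%g \in G by rewrite groupM ?groupV.
suff /(conj_stab_eq1 Gagg)[] : conj_stab (stab_aut x g * g^-1)%g = 1%g by [].
by rewrite morphM ?groupV //= conj_stabJ // conjgE cxg mulKg -morphM ?groupV // mulgV morph1.
Qed.

Lemma cent_conj_stab : 'C_[set: stabG](conj_stab @* G) = 'Z([set: stabG]).
Proof.
apply/eqP; rewrite eqEsubset andbC setIS ?centS ?subsetT //= -ker_stab_aut.
apply/subsetP => x Kx; have [l xl] := ker_stab_aut_scalar Kx.
rewrite inE in_setT; apply/centP => y _; apply: ssval_inj.
by rewrite !ssvalM xl /= /pairM /= mulg1 mul1g scalar_mxC.
Qed.

Lemma center_stabG_pprime p : p \in [pchar F] -> ~~ (p %| #|'Z([set: stabG])|)%N.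
Proof.
move=> pF; apply/negP => /(Cauchy (pcharf_prime pF))[x Zx ox].
have Kx : x \in 'ker stab_aut by rewrite ker_stab_aut cent_conj_stab.
have [l xl] := ker_stab_aut_scalar Kx.
have xkE k : ssval (x ^+ k)%g = (1%g, (l ^+ k)%:M).
  elim: k => [|k IHk]; first by rewrite ssval1 expr0.
  by rewrite expgS ssvalM xl IHk /= /pairM /= mulg1 exprS scalar_mxM.
have lp1 : l ^+ p = 1.
  pose i := Ordinal rep_dim_gt0.
  have := congr1 (fun y : stabG => (ssval y).2 i i) (expg_order x).
  by rewrite ox xkE ssval1 /= !mxE eqxx !mulr1n.
have l1 : l = 1 by apply/eqP; rewrite -(fmorph_eq1 (pFrobenius_aut pF)); apply/eqP.
have x1 : x = 1%g by apply: ssval_inj; rewrite xl l1.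
by move: (pcharf_prime pF); rewrite -ox x1 order1.
Qed.

Lemma conj_stab_normal : conj_stab @* G <| [set: stabG].
Proof.
rewrite /normal subsetT; apply/normsP => x _; apply/eqP.
rewrite eqEcard cardJg leqnn andbT; apply/subsetP => _ /imsetP[_ /morphimP[g _ Gg ->] ->].
by rewrite -conj_stabJ // mem_morphim ?stab_aut_closed.
Qed.

Lemma stab_repr_mx : mx_repr [set: stabG] (fun x => (ssval x).2).
Proof. by split=> [|x y _ _]; rewrite ?ssval1 ?ssvalM. Qed.

Definition stab_repr := MxRepresentation stab_repr_mx.

Lemma stab_repr_conj g : g \in G -> stab_repr (conj_stab g) = rho g.
Proof. by move=> Gg; rewrite /= conj_stabE. Qed.

End StabilizerGroup.

Lemma universal_pprime_cover_perfect p (sT gT : finGroupType) (S : {group sT})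
    (G : {group gT}) :
  universal_pprime_cover p S G -> G^`(1) = G.
Proof.
case=> yT [Y [P [[[perfY _] _] sylP /isog_symr/isogP[f injf <-]]]].
have nPY : Y \subset 'N(P).
  have sPZ : P \subset 'Z(Y) by move: sylP; rewrite inE => /pHall_sub.
  by apply: cents_norm; rewrite centsC (subset_trans sPZ) ?subsetIr.
by rewrite -morphim_der // -quotient_der // perfY.
Qed.

Theorem lemma3p4 (p : nat) (sT gT : finGroupType) (S : {group sT}) (G : {group gT})
  (F : closedFieldType) (n : nat) (rho : mx_representation F G n) :
  prime p -> simple S -> ~~ abelian S -> universal_pprime_cover p S G ->
  (p \in [pchar F])%R -> mx_irreducible rho ->
  exists (aT : finGroupType) (A N : {group aT})
    (f : {morphism (G / ('Z(G) :&: rker rho))%g >-> aT})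
    (h : {morphism A >-> {perm gT}}),
    ((N <| A)%g /\ isom (G / ('Z(G) :&: rker rho))%g N f /\
     (forall a : {perm gT}, a \in (h @* A)%g <-> in_Aut_stab rho a) /\
     'ker h = 'C_A(N)%g /\
     (forall a g, a \in A -> g \in G ->
        f (coset ('Z(G) :&: rker rho) (h a g)) = (f (coset ('Z(G) :&: rker rho) g) ^ a)%g) /\
     'C_A(N)%g = 'Z(A)%g /\ ~~ (p %| #|'Z(A)|)) /\
    (exists sigma : mx_representation F A n,
       forall g, g \in G -> sigma (f (coset ('Z(G) :&: rker rho) g)) = rho g).
Proof.
move=> _ _ _ /universal_pprime_cover_perfect perfG pF irr_rho.
have [s0 s0P] := stab_pairs_finite irr_rho.
have sE x : (x \in filter (stab_pair rho) s0) = stab_pair rho x.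
  by rewrite mem_filter andb_idr //; apply: s0P.
have nZG : G \subset 'N('Z(G) :&: rker rho).
  by apply/normal_norm/sub_center_normal/subsetIl.
have kerZ : 'ker (coset ('Z(G) :&: rker rho)) \subset 'ker (conj_stab_morphism sE perfG).
  by rewrite ker_coset ker_conj_stab.
pose f : {morphism G / ('Z(G) :&: rker rho) >-> _} := factm kerZ nZG.
have fE g : g \in G -> f (coset ('Z(G) :&: rker rho) g) = conj_stab sE g.
  exact: factmE.
exists _, [set: _]%G, (conj_stab_morphism sE perfG @* G)%G, f, (stab_aut_morphism sE).
split; last by exists (stab_repr sE) => g Gg; rewrite fE // stab_repr_conj.
split; first exact: conj_stab_normal.
split.
  apply/isomP; split; last exact: morphim_factm.
  by apply/injm_factmP; rewrite ker_coset ker_conj_stab.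
split; first exact: im_stab_aut.
split; first exact: ker_stab_aut.
split.
  by move=> x g _ Gg; rewrite !fE ?stab_aut_closed // conj_stabJ.
by split; [exact: cent_conj_stab | exact: center_stabG_pprime].
Qed.
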